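(* For every $n\ge 3$, $\lceil \log_2 n\rceil\le \mathrm{isat}(n,\bowtie)\le \binom{n}{2}+2n-1$.
   Context: $\mathcal{B}_n$ denotes the Boolean lattice $(2^{[n]},\subseteq)$. A family $\mathcal{F}\subseteq 2^{[n]}$ (ordered by inclusion) is induced-$\mathcal{P}$-saturated if it contains no induced copy of $\mathcal{P}$ (an injection $f$ with $u\le v\iff f(u)\subseteq f(v)$) but every family $\mathcal{F}'$ with $\mathcal{F}\subsetneq\mathcal{F}'\subseteq 2^{[n]}$ contains one. $\mathrm{isat}(n,\mathcal{P})$ is the minimum size of an induced-$\mathcal{P}$-saturated family in $\mathcal{B}_n$. The butterfly $\bowtie$ is the four-element poset on $\{A,B,C,D\}$ whose only strict relations are $A<B$, $A<D$, $C<B$, $C<D$ (so $A\parallel C$ and $B\parallel D$). *)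

From mathcomp Require Import all_boot.
Set Implicit Arguments. Unset Strict Implicit. Unset Printing Implicit Defensive.

(* The butterfly poset on 'I_4: A = 0, B = 1, C = 2, D = 3.
   Strict relations: A<B, A<D, C<B, C<D. *)
Definition bfly_bottom (u : 'I_4) : bool := (val u == 0) || (val u == 2).
Definition bfly_top (u : 'I_4) : bool := (val u == 1) || (val u == 3).
Definition bfly_le (u v : 'I_4) : bool := (u == v) || (bfly_bottom u && bfly_top v).

Definition family (n : nat) := {set {set 'I_n}}.

Definition has_induced_bfly (n : nat) (F : family n) : bool :=
  [exists f : {ffun 'I_4 -> {set 'I_n}},
     [&& injectiveb f, [forall u, f u \in F] &
         [forall u, forall v, bfly_le u v == (f u \subset f v)]]].

Definition bfly_saturated (n : nat) (F : family n) : bool :=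
  ~~ has_induced_bfly F &&
  [forall F' : family n, (F \proper F') ==> has_induced_bfly F'].

(* The default
   value (2^n).+1 is never attained since saturated families always exist
   (any inclusion-maximal butterfly-free family is saturated). *)
Definition isat_bfly (n : nat) : nat :=
  \big[minn/(2 ^ n).+1]_(F : family n | bfly_saturated F) #|F|.

From Pilot Require Import Defs.
From mathcomp Require Import all_boot zify.
Set Implicit Arguments. Unset Strict Implicit. Unset Printing Implicit Defensive.

(* Lower bound: in a saturated family F any two points i != j are separated by
   a member of F.  Otherwise take S maximal in F with i \notin S (or, if every
   member contains i, S minimal in F): the set i |: S (resp. S :\ i) is not in
   F, and replacing it by S in any butterfly it forms with members of F gives a
   butterfly inside F (in the second case it cannot even be a top).  Hence
   i |-> [set S in F | i \in S] is injective and n <= 2 ^ #|F|.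
   Upper bound: all sets of size at most 2 together with the initial segments
   [set i | i < k], 3 <= k <= n.  The tops of a butterfly have at least three
   elements, so they would be two comparable segments; and a new set X gives the
   butterfly [set a], [set b] < X, [set i | i < max X] for a, b in X :\ max X. *)

Lemma bigmin_le (I : finType) (P : pred I) (g : I -> nat) d x :
  P x -> \big[minn/d]_(y | P y) g y <= g x.
Proof.
move=> Px; elim: (index_enum I) (mem_index_enum x) => // y r IHr.
rewrite inE big_cons => /predU1P[<- | xr]; first by rewrite Px geq_minl.
by case: (P y); [apply: leq_trans (geq_minr _ _) _ |]; apply: IHr.
Qed.

Section Butterflies.

Variable T : finType.
Implicit Types (A B C D S X : {set T}) (F : {set {set T}}).

Definition butterfly A B C D : Prop :=
  [/\ [/\ A \subset B, A \subset D, C \subset B & C \subset D] &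
      [/\ ~~ (A \subset C), ~~ (C \subset A), ~~ (B \subset D) & ~~ (D \subset B)]].

Definition butterfly_in F A B C D : Prop :=
  [/\ A \in F, B \in F, C \in F, D \in F & butterfly A B C D].

Definition butterfly_free F : Prop := forall A B C D, ~ butterfly_in F A B C D.

Definition butterfly_saturated F : Prop :=
  butterfly_free F /\
  forall X, X \notin F -> exists A B C D, butterfly_in (X |: F) A B C D.

Lemma butterfly_swap_bottoms A B C D : butterfly A B C D -> butterfly C B A D.
Proof. by case=> -[????] [????]; split; split. Qed.

Lemma butterfly_swap_tops A B C D : butterfly A B C D -> butterfly A D C B.
Proof. by case=> -[????] [????]; split; split. Qed.

Lemma butterfly_tops_not_sub A B C D : butterfly A B C D ->
  [/\ ~~ (B \subset A), ~~ (D \subset A), ~~ (B \subset C) & ~~ (D \subset C)].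
Proof.
case=> -[AB AD CB CD] [_ _ nBD nDB].
split; [apply: contra nBD | apply: contra nDB | apply: contra nBD | apply: contra nDB];
  by move/subset_trans; apply.
Qed.

Lemma saturated_new_member F X : butterfly_saturated F -> X \notin F ->
  (exists B C D, [/\ B \in F, C \in F, D \in F & butterfly X B C D]) \/
  (exists A C D, [/\ A \in F, C \in F, D \in F & butterfly A X C D]).
Proof.
move=> [freeF satF] XF; have [A [B [C [D [FA FB FC FD bfly]]]]] := satF X XF.
have [nBA nDA nBC nDC] := butterfly_tops_not_sub bfly.
have [_ [nAC nCA nBD nDB]] := bfly.
have neq (Y Z : {set T}) : ~~ (Y \subset Z) -> Y != Z by apply: contraNneq => ->.
have inF (Y : {set T}) : Y \in X |: F -> Y != X -> Y \in F.
  by rewrite in_setU1 => /predU1P[->|//]; rewrite eqxx.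
have [eAX|nAX] := eqVneq A X.
  by left; exists B, C, D; subst; split; rewrite ?inF // ?neq.
have [eCX|nCX] := eqVneq C X.
  left; exists B, A, D; subst; split; rewrite ?inF // ?neq //.
  exact: butterfly_swap_bottoms.
have [eBX|nBX] := eqVneq B X.
  by right; exists A, C, D; subst; split; rewrite ?inF // ?neq.
have [eDX|nDX] := eqVneq D X.
  right; exists A, C, B; subst; split; rewrite ?inF // ?neq //.
  exact: butterfly_swap_tops.
by case: (freeF A B C D); split; rewrite ?inF.
Qed.

Lemma saturated_avoids F i : butterfly_saturated F -> [exists S in F, i \notin S].
Proof.
move=> satF; have [freeF extF] := satF; apply: contraT => /exists_inPn all_i.
have {}all_i S : S \in F -> i \in S by move/all_i; rewrite negbK.
have [S0 S0F] : exists S0, S0 \in F.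
  apply/set0Pn/negP=> /eqP F0; have := extF set0; rewrite F0 inE setU0.
  case=> // A [B [C [D [+ _ + _ [_ [nAC _ _ _]]]]]].
  by rewrite !inE => /eqP eA /eqP eC; rewrite eA eC subxx in nAC.
have [S /minsetP[SF Smin] _] := minset_exists (P := [in F]) S0F.
set X := S :\ i.
have XS : X \subset S by apply: subsetDl.
have iX : i \notin X by rewrite !inE eqxx.
have above_S Y : Y \in F -> X \subset Y -> S \subset Y.
  by move=> YF XY; rewrite -(setD1K (all_i S SF)) subUset sub1set all_i.
have [[B [C [D [FB FC FD [[XB XD CB CD] [nXC nCX nBD nDB]]]]]]
      | [A [C [D [FA _ _ [[AX _ _ _] _]]]]]] :=
  saturated_new_member satF (contra (@all_i X) iX).
- case: (freeF S B C D); split=> //; split; split;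
    rewrite ?(above_S B) ?(above_S D) //.
  + by apply: contra nXC; apply: subset_trans XS.
  + by apply/negP=> CS; move: nXC; rewrite (Smin C) ?XS.
- by move: iX; rewrite (subsetP AX) ?all_i.
Qed.

Lemma saturated_separates F i j : butterfly_saturated F -> i != j ->
  [exists S in F, (i \in S) != (j \in S)].
Proof.
move=> satF ij; have [freeF _] := satF; apply: contraT => /exists_inPn twin.
have {}twin S : S \in F -> (i \in S) = (j \in S) by move/twin/negPn/eqP.
have /exists_inP[S0 S0F iS0] := saturated_avoids i satF.
have [S /maxsetP[/andP[SF iS] Smax] _] :=
  @maxset_exists _ [pred Y | (Y \in F) && (i \notin Y)] S0 (introT andP (conj S0F iS0)).
have jS : j \notin S by rewrite -twin.
set X := i |: S.
have SX : S \subset X by apply: subsetUr.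
have jX : j \notin X by rewrite in_setU1 negb_or eq_sym ij.
have XF : X \notin F by apply: contra jX => /twin <-; apply: setU11.
have below_S Y : Y \in F -> Y \subset X -> Y \subset S.
  move=> YF YX; have iY : i \notin Y by rewrite twin //; apply: contra jX; apply: subsetP.
  by rewrite -(setU1K iS) subsetD1 YX.
have comparable_X Y : Y \in F -> S \subset Y -> (X \subset Y) || (Y \subset X).
  move=> YF SY; have [iY|iY] := boolP (i \in Y); first by rewrite subUset sub1set iY SY.
  by rewrite (Smax Y) ?SX ?orbT //= YF.
have [[B [C [D [FB FC FD [[XB XD CB CD] [nXC nCX nBD nDB]]]]]]
      | [A [C [D [FA FC FD [[AX AD CX CD] [nAC nCA nXD nDX]]]]]]] :=
  saturated_new_member satF XF.
- case: (freeF S B C D); split=> //; split; split;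
    rewrite ?(subset_trans SX XB) ?(subset_trans SX XD) //.
  + by apply/negP=> SC; move: (comparable_X C FC SC); rewrite (negbTE nXC) (negbTE nCX).
  + by apply: contra nCX => CS; apply: subset_trans CS SX.
- case: (freeF A S C D); split=> //; split; split;
    rewrite ?(below_S A) ?(below_S C) //.
  + by apply/negP=> SD; move: (comparable_X D FD SD); rewrite (negbTE nXD) (negbTE nDX).
  + by apply: contra nDX => DS; apply: subset_trans DS SX.
Qed.

Lemma saturated_card F : butterfly_saturated F -> #|T| <= 2 ^ #|F|.
Proof.
move=> satF; pose trace i := F :&: [set S : {set T} | i \in S].
have trace_inj : injective trace.
  move=> i j eij; apply/eqP; apply: contraT.
  case/(saturated_separates satF)/exists_inP=> S SF.
  by move/setP/(_ S): eij; rewrite !inE SF /= => ->; rewrite eqxx.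
rewrite -cardsT -(card_imset _ trace_inj) -card_powerset.
by apply/subset_leq_card/subsetP=> _ /imsetP[i _ ->]; rewrite powersetE subsetIl.
Qed.

Lemma butterfly_in_sub F F' A B C D :
  F \subset F' -> butterfly_in F A B C D -> butterfly_in F' A B C D.
Proof. by move/subsetP=> sFF' [FA FB FC FD bfly]; split; rewrite ?sFF'. Qed.

Lemma butterfly_top_card A B C D : butterfly A B C D -> 2 < #|B|.
Proof.
case=> -[AB AD CB CD] [/subsetPn[x xA xC] /subsetPn[y yC yA] nBD _].
rewrite ltnNge; apply: contra nBD => B_le2.
have xy : x != y by apply: contraNneq xC => ->.
have -> : B = [set x; y].
  apply/eqP; rewrite eq_sym eqEcard cards2 xy (leq_trans B_le2) // andbT.
  by rewrite subUset !sub1set (subsetP AB) ?(subsetP CB).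
by rewrite subUset !sub1set (subsetP AD) ?(subsetP CD).
Qed.

End Butterflies.

Lemma has_induced_bflyP n (F : Defs.family n) :
  reflect (exists A B C D, butterfly_in F A B C D) (has_induced_bfly F).
Proof.
apply: (iffP existsP) => [[f /and3P[_ /forallP fF /forallP fle]] | [A [B [C [D]]]]].
  have le u v : bfly_le u v = (f u \subset f v) by apply/eqP; have /forallP := fle u.
  exists (f (@Ordinal 4 0 isT)), (f (@Ordinal 4 1 isT)), (f (@Ordinal 4 2 isT)),
    (f (@Ordinal 4 3 isT)).
  by split; rewrite ?fF //; split; split; rewrite -le.
move=> [FA FB FC FD bfly]; have [[AB AD CB CD] [nAC nCA nBD nDB]] := bfly.
have [nBA nDA nBC nDC] := butterfly_tops_not_sub bfly.
pose f := [ffun u : 'I_4 => nth set0 [:: A; B; C; D] u].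
have le u v : bfly_le u v = (f u \subset f v).
  by case: u v => -[|[|[|[|//]]]] ? [[|[|[|[|//]]]] ?]; rewrite /bfly_le !ffunE /= ?subxx
    ?AB ?AD ?CB ?CD ?(negbTE nAC) ?(negbTE nCA) ?(negbTE nBD) ?(negbTE nDB)
    ?(negbTE nBA) ?(negbTE nDA) ?(negbTE nBC) ?(negbTE nDC).
exists f; apply/and3P; split.
- apply/injectiveP=> u v fuv.
  have {fuv}: bfly_le u v && bfly_le v u by rewrite !le fuv subxx.
  by case: u v => -[|[|[|[|//]]]] ? [[|[|[|[|//]]]] ?] //= _; apply: val_inj.
- by apply/forallP=> -[[|[|[|[|//]]]] ?]; rewrite ffunE.
- by apply/forallP=> u; apply/forallP=> v; rewrite le.
Qed.

Lemma bfly_saturatedP n (F : Defs.family n) :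
  reflect (butterfly_saturated F) (bfly_saturated F).
Proof.
apply: (iffP andP) => [[nbflyF /forallP satF] | [freeF extF]]; split.
- move=> A B C D bflyF; case/negP: nbflyF.
  by apply/has_induced_bflyP; exists A, B, C, D.
- move=> X XF; apply/has_induced_bflyP; move/implyP: (satF (X |: F)); apply.
  by rewrite properUr ?sub1set.
- by apply/has_induced_bflyP=> -[A [B [C [D]]]]; apply: freeF.
- apply/forallP=> F'; apply/implyP=> /properP[sFF' [X XF' XF]].
  have [A [B [C [D bflyXF]]]] := extF X XF; apply/has_induced_bflyP.
  by exists A, B, C, D; apply: butterfly_in_sub bflyXF; rewrite subUset sub1set XF'.
Qed.

Lemma up_log_le_isat_bfly n : up_log 2 n <= isat_bfly n.
Proof.
rewrite /isat_bfly; elim/big_ind: _ => [| a b | F /bfly_saturatedP /saturated_card].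
- apply: up_log_min => //.
  exact: leq_trans (leqW (ltnW (ltn_expl n _))) (ltnW (ltn_expl _ _)).
- by rewrite leq_min => ->.
- by rewrite card_ord => /(up_log_min (isT : 1 < 2)).
Qed.

Definition initial_seg n k : {set 'I_n} := [set i : 'I_n | i < k].

(* The segments have lengths k.+3 for k < n - 2, i.e. 3 <= length <= n. *)
Definition small_and_segments n : Defs.family n :=
  [set X : {set 'I_n} | #|X| <= 2] :|: [set initial_seg n k.+3 | k : 'I_(n - 2)].

Lemma card_initial_seg n k : #|initial_seg n k| <= k.
Proof.
rewrite cardE -(size_map val) -[k in _ <= k](size_iota 0).
apply: uniq_leq_size; first by rewrite (map_inj_uniq val_inj) enum_uniq.
by move=> x /mapP[i]; rewrite mem_enum inE => ik ->; rewrite mem_iota.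
Qed.

Lemma initial_seg_sub n a b : a <= b -> initial_seg n a \subset initial_seg n b.
Proof. by move=> ab; apply/subsetP=> i; rewrite !inE => /leq_trans; apply. Qed.

Lemma initial_seg_in n k : k <= n -> initial_seg n k \in small_and_segments n.
Proof.
move=> kn; rewrite !inE; case: (leqP k 2) => [k_le2 | k_gt2].
  by rewrite (leq_trans (card_initial_seg _ _)).
have k3 : k - 3 < n - 2 by lia.
by apply/orP; right; apply/imsetP; exists (Ordinal k3); rewrite //= -addn3 subnK.
Qed.

Lemma small_and_segments_free n : butterfly_free (small_and_segments n).
Proof.
move=> A B C D [_ FB _ FD bfly].
have B_big := butterfly_top_card bfly.
have D_big := butterfly_top_card (butterfly_swap_tops bfly).
have [_ [_ _ nBD nDB]] := bfly; move: FB FD nBD nDB.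
rewrite !inE leqNgt B_big leqNgt D_big /= => /imsetP[k _ ->] /imsetP[l _ ->].
by case: (leqP k l) => kl; [move=> /negP[] | move=> _ /negP[]];
  rewrite initial_seg_sub // ltnS ltnW.
Qed.

Lemma small_and_segments_saturated n : butterfly_saturated (small_and_segments n).
Proof.
split=> [|X XF]; first exact: small_and_segments_free.
have X_gt2 : 2 < #|X| by move: XF; rewrite !inE negb_or -ltnNge => /andP[].
have /set0Pn[x0 x0X] : X != set0 by rewrite -card_gt0 (ltn_trans _ X_gt2).
have [M MX Mmax] := arg_maxnP (fun i : 'I_n => val i) x0X.
have {}MX : M \in X := MX.
have /card_gt1P[a [b [+ + ab]]] : 1 < #|X :\ M| by rewrite (cardsD1 M) MX in X_gt2.
rewrite !inE => /andP[aM aX] /andP[bM bX].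
have below_M c : c \in X -> c != M -> c \in initial_seg n M.
  by move=> cX cM; rewrite inE ltn_neqAle val_eqE cM; apply: Mmax.
have X_sub : X \subset initial_seg n M.+1 by apply/subsetP=> i /Mmax; rewrite inE ltnS.
exists [set a], X, [set b], (initial_seg n M); split.
- by rewrite !inE cards1 orbT.
- exact: setU11.
- by rewrite !inE cards1 orbT.
- by rewrite setU1r // initial_seg_in // ltnW.
split; split; rewrite ?sub1set ?below_M ?in_set1 // 1?eq_sym //.
- by apply/subsetPn; exists M; rewrite // inE ltnn.
- apply: contra XF => segX; rewrite (_ : X = initial_seg n M.+1) ?initial_seg_in //.
  apply/eqP; rewrite eqEsubset X_sub; apply/subsetP=> i; rewrite inE ltnS leq_eqVlt.
  by case/predU1P=> [/val_inj-> // | iM]; apply: (subsetP segX); rewrite inE.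
Qed.

Lemma card_small_and_segments n :
  1 < n -> #|small_and_segments n| <= 'C(n, 2) + 2 * n - 1.
Proof.
move=> n_gt1.
have card_segs : #|[set initial_seg n k.+3 | k : 'I_(n - 2)]| <= n - 2.
  by apply: leq_trans (leq_imset_card _ _) _; rewrite card_ord.
have card_small : #|[set X : {set 'I_n} | #|X| <= 2]| <= 1 + n + 'C(n, 2).
  pose of_size k := [set X : {set 'I_n} | #|X| == k].
  have small_sub : [set X : {set 'I_n} | #|X| <= 2] \subset
      of_size 0 :|: of_size 1 :|: of_size 2.
    by apply/subsetP=> X; rewrite !inE; case: #|X| => [|[|[|]]].
  apply: leq_trans (subset_leq_card small_sub) _; apply: leq_trans (leq_card_setU _ _) _.
  rewrite card_draws card_ord leq_add2r; apply: leq_trans (leq_card_setU _ _) _.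
  by rewrite !card_draws card_ord bin0 bin1.
apply: leq_trans (leq_card_setU _ _) (leq_trans (leq_add card_small card_segs) _); lia.
Qed.

Theorem theorem1p7 (n : nat) (hn : 3 <= n) :
  up_log 2 n <= isat_bfly n <= 'C(n, 2) + 2 * n - 1.
Proof.
rewrite up_log_le_isat_bfly /isat_bfly /=.
have /bfly_saturatedP satF := small_and_segments_saturated n.
exact: leq_trans (bigmin_le _ _ satF) (card_small_and_segments (ltnW hn)).
Qed.
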